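(* Let $H(s)=\boldsymbol b^T(s\boldsymbol I-\boldsymbol A)^{-1}\boldsymbol b$ be a minimal SSS system of order $n$ with $\boldsymbol A$ symmetric negative definite, and let $r<n$. Suppose $\boldsymbol s^*$ is a fixed point of the IRKA map $\lambda$, and let $H_r$ be the associated reduced model (which is SSS, obtained as $\boldsymbol A_r=\boldsymbol Q_r^T\boldsymbol A\boldsymbol Q_r$, $\boldsymbol b_r=\boldsymbol c_r=\boldsymbol Q_r^T\boldsymbol b$ with $\boldsymbol Q_r$ an orthonormal basis of the range of $\boldsymbol V_r$), with distinct poles $\tilde\lambda_1,\dots,\tilde\lambda_r$ (so $s_i^*=-\tilde\lambda_i$ and $H_r$ is a Hermite interpolant of $H$ at $-\tilde\lambda_1,\dots,-\tilde\lambda_r$). Then the diagonal matrix $\boldsymbol E=\mathrm{diag}\big(H''(-\tilde\lambda_1)-H_r''(-\tilde\lambda_1),\dots,H''(-\tilde\lambda_r)-H_r''(-\tilde\lambda_r)\big)$ is positive definite.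
   Context: SSS: $\boldsymbol A=\boldsymbol A^T$, $\boldsymbol c=\boldsymbol b$. IRKA map: for distinct $s_1,\dots,s_r$ not eigenvalues of $\boldsymbol A$, set $\boldsymbol V_r=[(s_1\boldsymbol I-\boldsymbol A)^{-1}\boldsymbol b,\dots,(s_r\boldsymbol I-\boldsymbol A)^{-1}\boldsymbol b]$, $\boldsymbol W_r=\boldsymbol V_r$ (SSS case), $\boldsymbol A_r=(\boldsymbol W_r^T\boldsymbol V_r)^{-1}\boldsymbol W_r^T\boldsymbol A\boldsymbol V_r$, and $\lambda(\boldsymbol s)=-(\text{eigenvalues of }\boldsymbol A_r)$; a fixed point satisfies $\lambda(\boldsymbol s)=\boldsymbol s$. By construction, the reduced model satisfies $H(s_i)=H_r(s_i)$ and $H'(s_i)=H_r'(s_i)$. *)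

(* Scalars: an arbitrary real closed field R (the paper works over the reals). *)
From HB Require Import structures.
From mathcomp Require Import all_boot all_order all_algebra.
Set Implicit Arguments. Unset Strict Implicit. Unset Printing Implicit Defensive.
Import Order.TTheory GRing.Theory Num.Theory.
Local Open Scope ring_scope.

Section Defs.
Variable R : rcfType.

Definition has_deriv (f : R -> R) (x l : R) : Prop :=
  forall e : R, 0 < e -> exists2 d : R, 0 < d &
    forall h : R, h != 0 -> `|h| < d -> `|(f (x + h) - f x) / h - l| < e.

Definition has_deriv2 (f : R -> R) (x l : R) : Prop :=
  exists (f' : R -> R) (d : R), 0 < d /\
    (forall y, `|y - x| < d -> has_deriv f y (f' y)) /\ has_deriv f' x l.

Definition tf (n : nat) (A : 'M[R]_n) (b : 'cV[R]_n) (s : R) : R :=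
  (b^T *m invmx (s%:M - A) *m b) 0 0.

Definition negdef (n : nat) (A : 'M[R]_n) : Prop :=
  forall x : 'cV[R]_n, x != 0 -> (x^T *m A *m x) 0 0 < 0.

Definition posdef (n : nat) (A : 'M[R]_n) : Prop :=
  forall x : 'cV[R]_n, x != 0 -> 0 < (x^T *m A *m x) 0 0.

(* minimality of (A, b, c = b): the Krylov matrix [b, Ab, ..., A^{n-1} b] has full rank n
   (controllability; observability is the same condition since c = b and A = A^T) *)
Definition krylov (n : nat) (A : 'M[R]_n) (b : 'cV[R]_n) : 'M[R]_n :=
  \matrix_(i < n) (b^T *m (A ^+ i)^T).
Definition minimal (n : nat) (A : 'M[R]_n) (b : 'cV[R]_n) : Prop :=
  \rank (krylov A b) = n.

(* IRKA: V_r = [(s_1 I - A)^{-1} b, ..., (s_r I - A)^{-1} b], W_r = V_r *)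
Definition irka_V (n r : nat) (A : 'M[R]_n) (b : 'cV[R]_n) (s : 'I_r -> R)
  : 'M[R]_(n, r) :=
  \matrix_(i < n, j < r) (invmx ((s j)%:M - A) *m b) i 0.

Definition irka_Ar (n r : nat) (A : 'M[R]_n) (b : 'cV[R]_n) (s : 'I_r -> R)
  : 'M[R]_r :=
  let V := irka_V A b s in invmx (V^T *m V) *m (V^T *m A *m V).

(* fixed point lambda(s) = s: the eigenvalues of A_r (with multiplicity) are
   exactly -s_1, ..., -s_r *)
Definition irka_fixed (n r : nat) (A : 'M[R]_n) (b : 'cV[R]_n) (s : 'I_r -> R)
  : Prop :=
  char_poly (irka_Ar A b s) = \prod_(i < r) ('X - (- s i)%:P).

End Defs.

(* With R(s) = (sI - A)^{-1}, one has H''(s) = 2 b^T R(s)^3 b, and likewise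
   H_r''(s) = 2 (Q^T b)^T R_r(s)^3 (Q^T b) for the compressed system
   A_r = Q^T A Q.  Writing K = s_i I - A, the quantity b^T K^{-3} b is the
   K-energy of x1 = K^{-2} b, and the reduced one is the K-energy of the
   Galerkin approximation Q z of x1 in range Q (this uses that K^{-1} b lies
   in range Q, i.e. the interpolation property).  By K-orthogonality of the
   Galerkin error the difference is the energy of x1 - Q z, which is > 0
   as soon as K is positive definite and x1 is not in range Q. *)
From HB Require Import structures.
From mathcomp Require Import all_boot all_order all_algebra.
From mathcomp Require Import ring lra zify.
Import Order.TTheory GRing.Theory Num.Theory.
Local Open Scope ring_scope.
Set Implicit Arguments. Unset Strict Implicit.

Section Limits.
Variable R : rcfType.

(* [lim0 g l]: g h tends to l as h tends to 0 with h <> 0.  Note that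
   [has_deriv f x l] is by definition [lim0] of the difference quotient. *)
Definition lim0 (g : R -> R) (l : R) : Prop :=
  forall e : R, 0 < e -> exists2 d : R, 0 < d &
    forall h : R, h != 0 -> `|h| < d -> `|g h - l| < e.

Lemma lim0_cst c : lim0 (fun _ => c) c.
Proof. by move=> e e_gt0; exists 1 => // h _ _; rewrite subrr normr0. Qed.

Lemma lim0_shift x : lim0 (fun h => x + h) x.
Proof. by move=> e e_gt0; exists e => // h _; rewrite addrAC subrr add0r. Qed.

Lemma lim0_eq_near g k l :
  (exists2 d0, 0 < d0 & forall h, h != 0 -> `|h| < d0 -> g h = k h) ->
  lim0 g l -> lim0 k l.
Proof.
move=> [d0 d0_gt0 gk] gl e e_gt0; have [d d_gt0 gle] := gl e e_gt0.
exists (Num.min d d0); first by rewrite lt_min d_gt0 d0_gt0.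
by move=> h h0; rewrite lt_min => /andP[hd hd0]; rewrite -gk //; apply: gle.
Qed.

Lemma lim0D g k l m : lim0 g l -> lim0 k m -> lim0 (fun h => g h + k h) (l + m).
Proof.
move=> gl km e e_gt0; have e2_gt0 : 0 < e / 2 by rewrite divr_gt0.
have [d1 d1_gt0 gle] := gl _ e2_gt0; have [d2 d2_gt0 kme] := km _ e2_gt0.
exists (Num.min d1 d2); first by rewrite lt_min d1_gt0 d2_gt0.
move=> h h0; rewrite lt_min => /andP[hd1 hd2].
have := gle h h0 hd1; have := kme h h0 hd2.
have -> : g h + k h - (l + m) = (g h - l) + (k h - m) by ring.
by move=> ? ?; apply: le_lt_trans (ler_normD _ _) _; lra.
Qed.

Lemma lim0N g l : lim0 g l -> lim0 (fun h => - g h) (- l).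
Proof.
move=> gl e e_gt0; have [d d_gt0 gle] := gl e e_gt0.
by exists d => // h h0 hd; rewrite -opprD normrN; apply: gle.
Qed.

Lemma lim0M g k l m : lim0 g l -> lim0 k m -> lim0 (fun h => g h * k h) (l * m).
Proof.
move=> gl km e e_gt0; set C := `|l| + `|m| + 1.
have C_gt0 : 0 < C by rewrite /C; have := normr_ge0 l; have := normr_ge0 m; lra.
set d := Num.min 1 (e / C).
have d_gt0 : 0 < d by rewrite lt_min ltr01 divr_gt0.
have d_le1 : d <= 1 by rewrite ge_min lexx.
have dC_le : d * C <= e by rewrite -ler_pdivlMr // ge_min lexx orbT.
have [d1 d1_gt0 gld] := gl _ d_gt0; have [d2 d2_gt0 kmd] := km _ d_gt0.
exists (Num.min d1 d2); first by rewrite lt_min d1_gt0 d2_gt0.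
move=> h h0; rewrite lt_min => /andP[hd1 hd2].
have := gld h h0 hd1; have := kmd h h0 hd2.
have -> : g h * k h - l * m = (g h - l) * (k h - m) + (g h - l) * m + l * (k h - m).
  by ring.
set a := g h - l; set b := k h - m => b_lt a_lt.
have tri : `|a * b + a * m + l * b| <= `|a| * `|b| + `|a| * `|m| + `|l| * `|b|.
  by rewrite -!normrM; apply: le_trans (ler_normD _ _) _; rewrite lerD2r ler_normD.
apply: le_lt_trans tri _.
have := normr_ge0 a; have := normr_ge0 b; have := normr_ge0 l; have := normr_ge0 m.
rewrite /C in dC_le *; nra.
Qed.

Lemma lim0_away g l : lim0 g l -> l != 0 ->
  exists2 d, 0 < d & forall h, h != 0 -> `|h| < d -> `|l| / 2 < `|g h|.
Proof.
move=> gl l0; have l2_gt0 : 0 < `|l| / 2 by rewrite divr_gt0 ?normr_gt0.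
have [d d_gt0 gle] := gl _ l2_gt0; exists d => // h h0 hd.
by have := gle h h0 hd; have := lerB_dist l (g h); rewrite distrC; lra.
Qed.

Lemma lim0V g l : lim0 g l -> l != 0 -> lim0 (fun h => (g h)^-1) l^-1.
Proof.
move=> gl l0 e e_gt0; have l_gt0 : 0 < `|l| by rewrite normr_gt0.
have [d0 d0_gt0 g_away] := lim0_away gl l0.
have el_gt0 : 0 < e * `|l| ^+ 2 / 2 by rewrite divr_gt0 // mulr_gt0 // exprn_gt0.
have [d1 d1_gt0 gle] := gl _ el_gt0.
exists (Num.min d0 d1); first by rewrite lt_min d0_gt0 d1_gt0.
move=> h h0; rewrite lt_min => /andP[hd0 hd1].
have gh_big := g_away h h0 hd0; have gh_near := gle h h0 hd1.
have gh_gt0 : 0 < `|g h| by apply: lt_trans gh_big; rewrite divr_gt0.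
have gh0 : g h != 0 by rewrite -normr_gt0.
have -> : (g h)^-1 - l^-1 = (l - g h) / (g h * l) by field; apply/andP.
rewrite normrM normfV normrM ltr_pdivrMr ?mulr_gt0 // distrC.
have : e * `|l| ^+ 2 / 2 < e * (`|g h| * `|l|).
  by have := mulr_gt0 e_gt0 l_gt0; rewrite expr2; nra.
lra.
Qed.

Lemma lim0_sum (I : Type) (s : seq I) (F : I -> R -> R) (L : I -> R) :
  (forall i, lim0 (F i) (L i)) ->
  lim0 (fun h => \sum_(i <- s) F i h) (\sum_(i <- s) L i).
Proof.
move=> FL; elim: s => [|i s IHs].
  by rewrite big_nil; apply: lim0_eq_near (lim0_cst 0); exists 1 => // h _ _; rewrite big_nil.
rewrite big_cons; apply: lim0_eq_near (lim0D (FL i) IHs).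
by exists 1 => // h _ _; rewrite big_cons.
Qed.

Lemma lim0X g l k : lim0 g l -> lim0 (fun h => g h ^+ k) (l ^+ k).
Proof.
move=> gl; elim: k => [|k IHk].
  by rewrite expr0; apply: lim0_eq_near (lim0_cst 1); exists 1 => // h _ _.
rewrite exprS; apply: lim0_eq_near (lim0M gl IHk).
by exists 1 => // h _ _; rewrite exprS.
Qed.

Lemma lim0_horner (p : {poly R}) x : lim0 (fun h => p.[x + h]) p.[x].
Proof.
rewrite horner_coef; apply: lim0_eq_near; last first.
  by apply: lim0_sum => i; apply: lim0M (lim0_cst _) (lim0X _ (lim0_shift x)).
by exists 1 => // h _ _; rewrite horner_coef.
Qed.

Lemma has_derivN (f : R -> R) x l :
  has_deriv f x l -> has_deriv (fun y => - f y) x (- l).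
Proof.
move=> fl; apply: lim0_eq_near (lim0N fl).
by exists 1 => // h h0 _; field.
Qed.

End Limits.

Section QuadraticForms.
Variable R : rcfType.

(* The quadratic form x^T X x; [tf M c s] is [qform (res s) c] and [posdef],
   [negdef] are sign conditions on it. *)
Definition qform k (X : 'M[R]_k) (x : 'cV[R]_k) : R := (x^T *m X *m x) 0 0.

Lemma qformD k (X Y : 'M[R]_k) x : qform (X + Y) x = qform X x + qform Y x.
Proof. by rewrite /qform mulmxDr mulmxDl !mxE. Qed.

Lemma qformB k (X Y : 'M[R]_k) x : qform (X - Y) x = qform X x - qform Y x.
Proof. by rewrite /qform mulmxBr mulmxBl !mxE. Qed.

Lemma qformZ k a (X : 'M[R]_k) x : qform (a *: X) x = a * qform X x.
Proof. by rewrite /qform -scalemxAr -scalemxAl mxE. Qed.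

Lemma qform_congr k l (X : 'M[R]_k) (Q : 'M[R]_(k, l)) z :
  qform (Q^T *m X *m Q) z = qform X (Q *m z).
Proof. by rewrite /qform trmx_mul !mulmxA. Qed.

End QuadraticForms.

Section Resolvent.
Variables (R : rcfType) (m : nat) (M : 'M[R]_m).

Definition res (s : R) : 'M[R]_m := invmx (s%:M - M).

Lemma char_poly_mx_eval s : map_mx (horner_eval s) (char_poly_mx M) = s%:M - M.
Proof.
apply/matrixP => i j; rewrite !mxE horner_evalE.
by rewrite hornerD hornerN hornerMn hornerX hornerC.
Qed.

Lemma char_poly_horner s : (char_poly M).[s] = \det (s%:M - M).
Proof. by rewrite -char_poly_mx_eval det_map_mx /= horner_evalE. Qed.

Lemma shift_unitE s : (s%:M - M \in unitmx) = ((char_poly M).[s] != 0).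
Proof. by rewrite unitmxE unitfE char_poly_horner. Qed.

(* Cramer's rule: the entries of the resolvent are rational functions of s. *)
Lemma res_adj s i j : s%:M - M \in unitmx ->
  res s i j = (\adj (char_poly_mx M) i j).[s] / (char_poly M).[s].
Proof.
move=> U; rewrite /res /invmx U mxE char_poly_horner mulrC; congr (_ * _).
by rewrite -char_poly_mx_eval -map_mx_adj mxE /= horner_evalE.
Qed.

Lemma shift_unit_near s0 : s0%:M - M \in unitmx ->
  exists2 d, 0 < d & forall h, `|h| < d -> (s0 + h)%:M - M \in unitmx.
Proof.
rewrite shift_unitE => cp0.
have [d d_gt0 cp_away] := lim0_away (lim0_horner (char_poly M) s0) cp0.
exists d => // h hd; have [->|h0] := eqVneq h 0; first by rewrite addr0 shift_unitE.
rewrite shift_unitE -normr_gt0; apply: lt_trans (cp_away h h0 hd).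
by rewrite divr_gt0 ?normr_gt0.
Qed.

Definition mlim0 p q (F : R -> 'M[R]_(p, q)) (L : 'M[R]_(p, q)) : Prop :=
  forall i j, lim0 (fun h => F h i j) (L i j).

Lemma mlim0_cst p q (C : 'M[R]_(p, q)) : mlim0 (fun _ => C) C.
Proof. by move=> i j; apply: lim0_cst. Qed.

Lemma mlim0M p q k (F : R -> 'M[R]_(p, q)) (G : R -> 'M[R]_(q, k)) L1 L2 :
  mlim0 F L1 -> mlim0 G L2 -> mlim0 (fun h => F h *m G h) (L1 *m L2).
Proof.
move=> FL GL i j; rewrite mxE; apply: lim0_eq_near; last first.
  by apply: lim0_sum => l; apply: lim0M (FL i l) (GL l j).
by exists 1 => // h _ _; rewrite mxE.
Qed.

Lemma mlim0_qform (F : R -> 'M[R]_m) L c :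
  mlim0 F L -> lim0 (fun h => qform (F h) c) (qform L c).
Proof. by move=> FL; apply: (mlim0M (mlim0M (mlim0_cst _) FL) (mlim0_cst _)). Qed.

Lemma mlim0_res s0 : s0%:M - M \in unitmx -> mlim0 (fun h => res (s0 + h)) (res s0).
Proof.
move=> U i j; have [d d_gt0 U_near] := shift_unit_near U.
rewrite res_adj //; apply: lim0_eq_near; last first.
  by apply: lim0M (lim0_horner _ _) (lim0V (lim0_horner _ _) _); rewrite -shift_unitE.
by exists d => // h _ hd; rewrite res_adj ?U_near.
Qed.

Lemma res_identity s t : s%:M - M \in unitmx -> t%:M - M \in unitmx ->
  res t - res s = (s - t) *: (res t *m res s).
Proof.
move=> Us Ut; have shiftB : (s%:M - M) - (t%:M - M) = (s - t)%:M :> 'M_m.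
  by rewrite opprB addrA subrK raddfB.
rewrite scalemxAr -mul_scalar_mx -shiftB mulmxBl mulmxBr mulmxA.
rewrite -[res t *m _ *m res s]mulmxA /res (mulmxV Us) mulmx1.
by rewrite mulmxA (mulVmx Ut) mul1mx.
Qed.

Variable c : 'cV[R]_m.

Lemma deriv_tf s0 : s0%:M - M \in unitmx ->
  has_deriv (tf M c) s0 (- qform (res s0 *m res s0) c).
Proof.
move=> U; have [d d_gt0 U_near] := shift_unit_near U.
apply: (@lim0_eq_near _ (fun h => - qform (res (s0 + h) *m res s0) c)).
  exists d => // h h0 hd; rewrite [tf _ _ _]/(qform (res _) c) -qformB.
  by rewrite res_identity ?U_near // qformZ; field.
by apply/lim0N/mlim0_qform/mlim0M; [apply: mlim0_res | apply: mlim0_cst].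
Qed.

Lemma deriv_qform_res2 s0 : s0%:M - M \in unitmx ->
  has_deriv (fun y => qform (res y *m res y) c) s0
    (- (2 * qform (res s0 *m res s0 *m res s0) c)).
Proof.
move=> U; have [d d_gt0 U_near] := shift_unit_near U.
apply: (@lim0_eq_near _ (fun h => - (qform (res (s0 + h) *m res (s0 + h) *m res s0) c
                                   + qform (res (s0 + h) *m res s0 *m res s0) c))).
  exists d => // h h0 hd; rewrite -qformB.
  have -> : res (s0 + h) *m res (s0 + h) - res s0 *m res s0 =
      res (s0 + h) *m (res (s0 + h) - res s0) + (res (s0 + h) - res s0) *m res s0.
    by rewrite mulmxBr mulmxBl addrA subrK.
  rewrite res_identity ?U_near // -scalemxAr -scalemxAl -scalerDr qformZ qformD.
  by rewrite !mulmxA; field.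
have cube_lim := mlim0M (mlim0M (mlim0_res U) (mlim0_res U)) (mlim0_cst (res s0)).
have sq_lim := mlim0M (mlim0M (mlim0_res U) (mlim0_cst (res s0))) (mlim0_cst (res s0)).
rewrite mulr2n mulrDl mul1r; apply/lim0N/lim0D; apply: mlim0_qform.
- by apply: cube_lim.
- by apply: sq_lim.
Qed.

Lemma deriv2_tf s0 : s0%:M - M \in unitmx ->
  has_deriv2 (tf M c) s0 (2 * qform (res s0 *m res s0 *m res s0) c).
Proof.
move=> U; have [d d_gt0 U_near] := shift_unit_near U.
exists (fun y => - qform (res y *m res y) c), d; split => //; split.
  by move=> y yd; apply: deriv_tf; rewrite -(subrKC s0 y) U_near.
by rewrite -[X in has_deriv _ _ X]opprK; apply/has_derivN/deriv_qform_res2.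
Qed.

End Resolvent.

Section Krylov.
Variables (R : rcfType) (n' : nat) (A : 'M[R]_n'.+1) (b : 'cV[R]_n'.+1).

Lemma horner_mx_coef (p : {poly R}) N : (size p <= N)%N ->
  horner_mx A p = \sum_(k < N) p`_k *: A ^+ k.
Proof.
move=> sp; have pE : p = \poly_(k < N) p`_k.
  apply/polyP => k; rewrite coef_poly; case: ltnP => // Nk.
  by rewrite nth_default // (leq_trans sp Nk).
rewrite {1}pE poly_def linear_sum; apply: eq_bigr => k _.
by rewrite linearZ /= rmorphXn /= horner_mx_X.
Qed.

Lemma minimal_poly_eq0 (p : {poly R}) :
  minimal A b -> (size p <= n'.+1)%N -> horner_mx A p *m b = 0 -> p = 0.
Proof.
move=> Amin sp pAb0.
have coef_krylov : (\row_(k < n'.+1) p`_k) *m krylov A b = 0.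
  rewrite mulmx_sum_row -[RHS](linear0 trmx) -pAb0 (horner_mx_coef sp).
  rewrite mulmx_suml linear_sum; apply: eq_bigr => k _.
  by rewrite /krylov rowK mxE -scalemxAl linearZ /= trmx_mul.
have krylov_free : row_free (krylov A b) by rewrite /row_free Amin.
move/eqP: coef_krylov; rewrite mulmx_free_eq0 // => /eqP coefs0.
apply/polyP => k; rewrite coef0.
case: (ltnP k n'.+1) => kn; last by rewrite nth_default // (leq_trans sp kn).
by have := congr1 (fun u : 'rV_n'.+1 => u 0 (Ordinal kn)) coefs0; rewrite !mxE.
Qed.

Lemma horner_XsubC_res s (v : 'cV[R]_n'.+1) : s%:M - A \in unitmx ->
  horner_mx A ('X - s%:P) *m (res A s *m v) = - v.
Proof.
move=> U; rewrite rmorphB /= horner_mx_X horner_mx_C -opprB mulNmx mulmxA.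
by rewrite mulmxV // mul1mx.
Qed.

Lemma size_prod_XsubC_but r (s : 'I_r -> R) (j : 'I_r) :
  (size (\prod_(k | k != j) ('X - (s k)%:P))%R <= r)%N.
Proof.
apply: leq_trans (size_poly_prod_leq _ _) _.
under eq_bigr => k _ do rewrite size_XsubC.
rewrite sum_nat_const cardC1 card_ord; have := ltn_ord j; lia.
Qed.

Lemma irka_V_col r (s : 'I_r -> R) j : col j (irka_V A b s) = res A (s j) *m b.
Proof. by apply/matrixP => k l; rewrite (ord1 l) !mxE. Qed.

(* For a minimal system and r < n distinct shifts, R(s_i)^2 b is not a linear
   combination of the IRKA directions R(s_j) b: otherwise, multiplying by
   (A - s_i) \prod_j (A - s_j) yields an annihilating polynomial of degree
   at most r < n which is nonzero at s_i. *)
Lemma res_sq_notin_irka_span r (s : 'I_r -> R) i :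
  minimal A b -> (r < n'.+1)%N -> injective s ->
  (forall j, (s j)%:M - A \in unitmx) ->
  ~~ ((res A (s i) *m (res A (s i) *m b))^T <= (irka_V A b s)^T)%MS.
Proof.
move=> Amin rn s_inj U; apply/negP => /submxP[c cE].
have comb : res A (s i) *m (res A (s i) *m b) = \sum_j c 0 j *: (res A (s j) *m b).
  rewrite -[LHS]trmxK cE mulmx_sum_row linear_sum; apply: eq_bigr => j _.
  by rewrite linearZ /= -tr_col trmxK irka_V_col.
pose g j := 'X - (s j)%:P.
pose p_i := \prod_(j | j != i) g j.
pose q j := g i * \prod_(k | k != j) g k.
pose T := horner_mx A (g i * \prod_k g k).
have T_lhs : T *m (res A (s i) *m (res A (s i) *m b)) = horner_mx A p_i *m b.
  have -> : T = horner_mx A p_i *m (horner_mx A (g i) *m horner_mx A (g i)).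
    rewrite /T !mulmxE -!rmorphM /= (bigD1 i) //=; congr (horner_mx A _).
    by rewrite /p_i; ring.
  by rewrite -!mulmxA horner_XsubC_res // mulmxN horner_XsubC_res // opprK.
have T_rhs j : T *m (res A (s j) *m b) = - (horner_mx A (q j) *m b).
  have -> : T = horner_mx A (q j) *m horner_mx A (g j).
    rewrite /T mulmxE -rmorphM /= (bigD1 j) //=; congr (horner_mx A _).
    by rewrite /q; ring.
  by rewrite -mulmxA horner_XsubC_res // mulmxN.
pose P := p_i + \sum_j c 0 j *: q j.
have P_ann : horner_mx A P *m b = 0.
  rewrite rmorphD /= linear_sum /= mulmxDl -T_lhs comb mulmx_sumr mulmx_suml.
  rewrite -big_split /=; apply: big1 => j _.
  by rewrite -scalemxAr T_rhs linearZ /= -scalemxAl scalerN addNr.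
have P_size : (size P <= n'.+1)%N.
  apply: leq_trans (size_polyD _ _) _; rewrite geq_max; apply/andP; split.
    exact: leq_trans (size_prod_XsubC_but s i) (ltnW rn).
  apply: (big_ind (fun p : {poly R} => size p <= n'.+1)%N); first by rewrite size_poly0.
    by move=> p p' sp sp'; apply: leq_trans (size_polyD _ _) _; rewrite geq_max sp sp'.
  move=> j _; apply: leq_trans (size_scale_leq _ _) _.
  apply: leq_trans (size_polyMleq _ _) _; rewrite /g size_XsubC /=.
  exact: leq_trans (size_prod_XsubC_but s j) _.
suff : P.[s i] != 0 by rewrite (minimal_poly_eq0 Amin P_size P_ann) horner0 eqxx.
rewrite /P hornerD horner_sum big1 ?addr0 => [|j _]; last first.
  by rewrite hornerZ /q hornerM /g hornerXsubC subrr mul0r mulr0.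
rewrite /p_i horner_prod; apply/prodf_neq0 => j ji.
by rewrite hornerXsubC subr_eq0 eq_sym (inj_eq s_inj).
Qed.

End Krylov.

Section PositiveDefinite.
Variable R : rcfType.

Lemma posdef_unit k (K : 'M[R]_k) : posdef K -> K \in unitmx.
Proof.
move=> K_pd; rewrite unitmxE unitfE; apply/negP => /det0P[v v0 vK].
have vT0 : v^T != 0 by rewrite -(inj_eq trmx_inj) trmxK linear0.
by have := K_pd _ vT0; rewrite trmxK vK mul0mx mxE ltxx.
Qed.

Lemma posdef_diag k (d : 'rV[R]_k) : (forall j, 0 < d 0 j) -> posdef (diag_mx d).
Proof.
move=> d_gt0 x x0; have [j0 xj0] : exists j, x j 0 != 0.
  apply/existsP; apply: contraR x0; rewrite negb_exists => /forallP x_eq0.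
  by apply/eqP/matrixP => j l; rewrite (ord1 l) mxE; apply/eqP/negbNE/x_eq0.
have -> : (x^T *m diag_mx d *m x) 0 0 = \sum_j d 0 j * x j 0 ^+ 2.
  by rewrite mul_mx_diag !mxE; apply: eq_bigr => j _; rewrite !mxE; ring.
rewrite (bigD1 j0) //=; apply: ltr_pwDl.
  by rewrite mulr_gt0 // exprn_even_gt0 ?xj0 ?orbT.
by apply: sumr_ge0 => j _; rewrite mulr_ge0 ?sqr_ge0 ?ltW.
Qed.

Lemma posdef1 k : posdef (1%:M : 'M[R]_k).
Proof. by rewrite -diag_const_mx; apply: posdef_diag => j; rewrite mxE. Qed.

Lemma posdef_shift k (A : 'M[R]_k) s : negdef A -> 0 < s -> posdef (s%:M - A).
Proof.
move=> A_nd s_gt0 x x0; have xAx := A_nd x x0; have xx := posdef1 x0.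
rewrite -/(qform A x) in xAx; rewrite -/(qform 1%:M x) in xx.
by change (0 < qform (s%:M - A) x); rewrite qformB -scalemx1 qformZ; nra.
Qed.

Lemma posdef_congr k l (K : 'M[R]_k) (Q : 'M[R]_(k, l)) :
  Q^T *m Q = 1%:M -> posdef K -> posdef (Q^T *m K *m Q).
Proof.
move=> QQ K_pd z z0; change (0 < qform (Q^T *m K *m Q) z); rewrite qform_congr.
apply: K_pd.
by apply: contraNneq z0 => Qz0; rewrite -[z]mul1mx -QQ -mulmxA Qz0 mulmx0.
Qed.

Lemma qform_inv_cube k (K : 'M[R]_k) c : K^T = K -> K \in unitmx ->
  qform (invmx K *m invmx K *m invmx K) c = qform K (invmx K *m (invmx K *m c)).
Proof.
move=> K_sym U; rewrite /qform !trmx_mul trmx_inv K_sym !mulmxA.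
by rewrite -[_ *m K *m invmx K]mulmxA mulmxV // mulmx1.
Qed.

End PositiveDefinite.

Section GalerkinEnergy.
Variables (R : rcfType) (n r : nat) (K : 'M[R]_n) (Q : 'M[R]_(n, r)).
Hypotheses (K_sym : K^T = K) (K_pd : posdef K) (Q_orth : Q^T *m Q = 1%:M).

Lemma qform_orth_split z d : Q^T *m K *m d = 0 ->
  qform K (Q *m z + d) = qform K (Q *m z) + qform K d.
Proof.
move=> QKd0; have zKd0 : (Q *m z)^T *m K *m d = 0.
  by rewrite trmx_mul -!mulmxA [Q^T *m _]mulmxA QKd0 mulmx0.
have dKz0 : d^T *m K *m (Q *m z) = 0.
  rewrite -[LHS]trmxK trmx_mul [(d^T *m K)^T]trmx_mul !trmxK K_sym mulmxA.
  by rewrite zKd0 linear0.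
rewrite /qform [(Q *m z + d)^T]linearD /= !mulmxDl !mulmxDr zKd0 dKz0.
by rewrite addr0 add0r mxE.
Qed.

(* Indeed both are K-energies, of K^{-2} b and of its
   K-orthogonal projection onto range Q. *)
Lemma galerkin_energy b :
  Q *m (Q^T *m (invmx K *m b)) = invmx K *m b ->
  (forall z, Q *m z != invmx K *m (invmx K *m b)) ->
  qform (invmx (Q^T *m K *m Q) *m invmx (Q^T *m K *m Q) *m invmx (Q^T *m K *m Q))
      (Q^T *m b)
    < qform (invmx K *m invmx K *m invmx K) b.
Proof.
move=> x_inQ x1_notinQ; set Kr := Q^T *m K *m Q.
have U : K \in unitmx by apply: posdef_unit.
have Kr_pd : posdef Kr by apply: posdef_congr.
have Ur : Kr \in unitmx by apply: posdef_unit.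
have Kr_sym : Kr^T = Kr by rewrite /Kr !trmx_mul trmxK K_sym mulmxA.
set x := invmx K *m b in x_inQ x1_notinQ; set x1 := invmx K *m x in x1_notinQ.
(* the reduced solution is the projection of the full one *)
have y_eq : invmx Kr *m (Q^T *m b) = Q^T *m x.
  apply: (canLR (mulKmx Ur)); rewrite /Kr -!mulmxA x_inQ.
  by rewrite /x [K *m _]mulmxA mulmxV // mul1mx.
set z := invmx Kr *m (Q^T *m x).
have galerkin : Q^T *m K *m (x1 - Q *m z) = 0.
  rewrite mulmxBr [Q^T *m K *m (Q *m z)]mulmxA -/Kr /z mulKVmx //.
  by rewrite -mulmxA /x1 mulKVmx // subrr.
have x1_split : x1 = Q *m z + (x1 - Q *m z) by rewrite addrC subrK.
have d0 : x1 - Q *m z != 0 by rewrite subr_eq0 eq_sym.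
rewrite !qform_inv_cube // y_eq -/z -/x -/x1 -[Kr]/(Q^T *m K *m Q) qform_congr.
by rewrite x1_split qform_orth_split // ltrDl; apply: K_pd.
Qed.

End GalerkinEnergy.

Section GalerkinSpectrum.
Variables (R : rcfType) (n r : nat) (A : 'M[R]_n).

Lemma galerkin_eigen_neg (V : 'M[R]_(n, r)) l : negdef A -> row_free V^T ->
  root (char_poly (invmx (V^T *m V) *m (V^T *m A *m V))) l -> l < 0.
Proof.
move=> A_nd V_free; rewrite -eigenvalue_root_char => /eigenvalueP[v vAr v0].
have V_inj (z : 'cV_r) : z != 0 -> V *m z != 0.
  move=> z0; rewrite -(inj_eq trmx_inj) trmx_mul linear0 mulmx_free_eq0 //.
  by rewrite trmx_eq0.
have G_pd : posdef (V^T *m V).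
  move=> z z0; rewrite -[_ 0 0]/(qform _ z).
  have -> : V^T *m V = V^T *m 1%:M *m V by rewrite mulmx1.
  by rewrite qform_congr; apply/posdef1/V_inj.
have GU := posdef_unit G_pd.
set u := v *m invmx (V^T *m V).
have uT0 : u^T != 0.
  rewrite trmx_eq0; apply: contraNneq v0 => u0.
  by rewrite -[v](mulmxKV GU) -/u u0 mul0mx.
have uAV : u *m (V^T *m A *m V) = l *: (u *m (V^T *m V)).
  by rewrite /u mulmxKV // -mulmxA vAr.
have uGu := G_pd _ uT0; have := A_nd _ (V_inj _ uT0).
rewrite -[(_ *m A *m _) 0 0]/(qform A _) -qform_congr /qform trmxK uAV.
by rewrite trmxK in uGu; rewrite -scalemxAl mxE; nra.
Qed.

End GalerkinSpectrum.

Section OrthonormalBasis.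
Variables (R : rcfType) (n r : nat) (Q : 'M[R]_(n, r)).
Hypothesis Q_orth : Q^T *m Q = 1%:M.

Lemma orth_proj_id (v : 'cV[R]_n) : (v^T <= Q^T)%MS -> Q *m (Q^T *m v) = v.
Proof.
move=> /submxP[c vE]; rewrite -[v]trmxK vE trmx_mul trmxK.
by rewrite [Q^T *m (Q *m _)]mulmxA Q_orth mul1mx.
Qed.

Lemma row_free_orth : row_free Q^T.
Proof. by rewrite -row_leq_rank -{1}(mxrank1 R r) -Q_orth mxrankM_maxl. Qed.

Lemma compress_shift (A : 'M[R]_n) s :
  s%:M - Q^T *m A *m Q = Q^T *m (s%:M - A) *m Q.
Proof. by rewrite mulmxBr mulmxBl mul_mx_scalar -scalemxAl Q_orth scalemx1. Qed.

End OrthonormalBasis.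

Lemma irka_fixed_root (R : rcfType) n r (A : 'M[R]_n) b (s : 'I_r -> R) i :
  irka_fixed A b s -> root (char_poly (irka_Ar A b s)) (- s i).
Proof.
move=> fixed; rewrite fixed rootE horner_prod (bigD1 i) //=.
by rewrite hornerXsubC subrr mul0r.
Qed.

Unset Implicit Arguments.
Theorem lemma4 (R : rcfType) (n r : nat) (A : 'M[R]_n) (b : 'cV[R]_n)
    (s : 'I_r -> R) (Q : 'M[R]_(n, r)) :
  A^T = A -> negdef A -> minimal A b -> (r < n)%N ->
  injective s -> (forall i, (s i)%:M - A \in unitmx) ->
  irka_fixed A b s ->
  Q^T *m Q = 1%:M -> (Q^T == (irka_V A b s)^T)%MS ->
  exists d2H d2Hr : 'I_r -> R,
    (forall i, has_deriv2 (tf A b) (s i) (d2H i) /\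
               has_deriv2 (tf (Q^T *m A *m Q) (Q^T *m b)) (s i) (d2Hr i)) /\
    posdef (diag_mx (\row_i (d2H i - d2Hr i))).
Proof.
case: n A b Q => [|n'] // A b Q A_sym A_nd Amin rn s_inj U fixed Q_orth QV.
set V := irka_V A b s; have /andP[QsubV VsubQ] := QV.
have V_free : row_free V^T.
  by rewrite /row_free -(eqmx_rank QV); apply: row_free_orth.
(* the shifts are positive, since the poles -s_i of H_r are Ritz values of A *)
have s_pos i : 0 < s i.
  by rewrite -oppr_lt0; apply: (galerkin_eigen_neg A_nd V_free); apply: irka_fixed_root.
have K_pd i : posdef ((s i)%:M - A) by apply: posdef_shift.
have K_sym i : ((s i)%:M - A)^T = (s i)%:M - A by rewrite linearB /= tr_scalar_mx A_sym.
have Kr_unit i : (s i)%:M - Q^T *m A *m Q \in unitmx.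
  by rewrite compress_shift //; apply/posdef_unit/posdef_congr.
(* R(s_i) b lies in range Q (interpolation), while R(s_i)^2 b does not *)
have x_inQ i : Q *m (Q^T *m (res A (s i) *m b)) = res A (s i) *m b.
  apply: (orth_proj_id Q_orth); rewrite -irka_V_col tr_col.
  exact: submx_trans (row_sub i V^T) VsubQ.
have x1_notinQ i z : Q *m z != res A (s i) *m (res A (s i) *m b).
  apply: contraNneq (res_sq_notin_irka_span i Amin rn s_inj U) => <-.
  by rewrite trmx_mul; apply: submx_trans QsubV; apply: submxMl.
exists (fun i => 2 * qform (res A (s i) *m res A (s i) *m res A (s i)) b).
exists (fun i => 2 * qform (res (Q^T *m A *m Q) (s i) *m res (Q^T *m A *m Q) (s i)
                             *m res (Q^T *m A *m Q) (s i)) (Q^T *m b)).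
split => [i|]; first by split; apply: deriv2_tf; [apply: U | apply: Kr_unit].
apply: posdef_diag => i; rewrite mxE.
have := galerkin_energy (K_sym i) (K_pd i) Q_orth (x_inQ i) (x1_notinQ i).
by rewrite /res compress_shift //; lra.
Qed.
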